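(* Let $\alpha>0$ and $k\ge 2$ be an integer. Then $$\sum_{\sigma\in\mathfrak S_k}\det\Big[\Gamma(1+\sigma(i)\alpha)\,\Gamma(j+\sigma(i)\alpha)\prod_{r=1}^{i-1}(r+\sigma(i)\alpha)\Big]_{1\le i,j\le k}=\alpha^{k(k-1)}\Big(\prod_{j=1}^k (j-1)!\,\Gamma(1+\alpha j)\Big)^2.$$
   Context: $\mathfrak S_k$ is the symmetric group on $\{1,\dots,k\}$; in the matrix, $i$ is the row index and $j$ the column index, and empty products equal $1$. *)

From HB Require Import structures.
From Stdlib Require Import Reals Lra Classical ClassicalEpsilon
  FunctionalExtensionality PropExtensionality.
From mathcomp Require Import all_boot all_order all_algebra all_fingroup.

Set Implicit Arguments.
Unset Strict Implicit.
Unset Printing Implicit Defensive.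

Local Open Scope R_scope.

Definition Req_bool (x y : R) : bool := if Req_EM_T x y then true else false.

Lemma Req_boolP : Equality.axiom Req_bool.
Proof. by move=> x y; rewrite /Req_bool; case: Req_EM_T => h; constructor. Qed.

HB.instance Definition _ := hasDecEq.Build R Req_boolP.

Definition R_find (P : pred R) (n : nat) : option R :=
  match excluded_middle_informative (exists x, P x) with
  | left h => Some (proj1_sig (constructive_indefinite_description _ h))
  | right _ => None
  end.

Lemma R_find_correct (P : pred R) n x : R_find P n = Some x -> P x.
Proof.
rewrite /R_find; case: excluded_middle_informative => // h [<-].
exact: proj2_sig (constructive_indefinite_description _ h).
Qed.

Lemma R_find_complete (P : pred R) : (exists x, P x) -> exists n, R_find P n.
Proof.
move=> h; exists 0%N; rewrite /R_find; case: excluded_middle_informative => //.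
Qed.

Lemma R_find_ext (P Q : pred R) : P =1 Q -> R_find P =1 R_find Q.
Proof.
move=> PQ; have -> : P = Q by apply: functional_extensionality.
by [].
Qed.

HB.instance Definition _ :=
  hasChoice.Build R R_find_correct R_find_complete R_find_ext.

Lemma R_addA : ssrfun.associative Rplus. Proof. by move=> x y z; rewrite Rplus_assoc. Qed.
Lemma R_addC : ssrfun.commutative Rplus. Proof. exact: Rplus_comm. Qed.
Lemma R_add0 : ssrfun.left_id 0 Rplus. Proof. exact: Rplus_0_l. Qed.
Lemma R_addN : ssrfun.left_inverse 0 Ropp Rplus.
Proof. by move=> x; rewrite Rplus_comm Rplus_opp_r. Qed.

HB.instance Definition _ := GRing.isZmodule.Build R R_addA R_addC R_add0 R_addN.

Lemma R_mulA : ssrfun.associative Rmult. Proof. by move=> x y z; rewrite Rmult_assoc. Qed.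
Lemma R_mulC : ssrfun.commutative Rmult. Proof. exact: Rmult_comm. Qed.
Lemma R_mul1 : ssrfun.left_id 1 Rmult. Proof. exact: Rmult_1_l. Qed.
Lemma R_mulDl : ssrfun.left_distributive Rmult Rplus.
Proof. by move=> x y z; rewrite Rmult_plus_distr_r. Qed.
Lemma R_one_neq0 : (1 : R) != 0.
Proof. by apply/eqP; exact: R1_neq_R0. Qed.

HB.instance Definition _ :=
  GRing.Zmodule_isComNzRing.Build R R_mulA R_mulC R_mul1 R_mulDl R_one_neq0.

Definition R_inv (x : R) : R := if Req_bool x 0 then 0 else Rinv x.

Lemma R_mulVf (x : R) : x != 0 -> Rmult (R_inv x) x = 1.
Proof.
move=> /eqP hx; rewrite /R_inv; case: Req_boolP => // _.
exact: Rinv_l.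
Qed.

Lemma R_inv0 : R_inv 0 = 0.
Proof. by rewrite /R_inv; case: Req_boolP. Qed.

HB.instance Definition _ := GRing.ComNzRing_isField.Build R R_mulVf R_inv0.

(* ---------- Euler's Gamma function (Gauss's limit formula) ----------
   Gamma x = lim_{n -> oo} n! n^x / (x (x+1) ... (x+n)),
   valid for every real x that is not a non-positive integer (in
   particular for all x > 0, which is the only range used below). *)

Fixpoint rising_prod (x : R) (n : nat) : R :=
  match n with
  | O => x
  | S m => Rmult (rising_prod x m) (Rplus x (INR (S m)))
  end.

Definition gauss_seq (x : R) (n : nat) : R :=
  Rdiv (Rmult (INR (Factorial.fact n)) (Rpower (INR n) x)) (rising_prod x n).

Definition Gamma (x : R) : R :=
  epsilon (inhabits 0) (fun l => Un_cv (gauss_seq x) l).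
Arguments Gamma x%ring_scope.

(* Gauss's sequence n! n^x / x(x+1)⋯(x+n) converges for 0 < x ≤ 1, squeezed
   between itself (increasing) and the decreasing sequence with n^x replaced by
   (n+1)^x; the shift x ↦ x+1 multiplies the limit by x, giving convergence for
   all x > 0 and Γ(x+1) = xΓ(x).  Hence Γ(j+y) = Γ(1+y)(y+1)⋯(y+j-1), and with
   y = σ(i)α the (i,j) entry of the σ-th matrix is Γ(1+y)² V(y,i) V(y,j), where
   V(y,j) = (y+1)⋯(y+j-1).  Summing the Leibniz expansions over σ yields
   ∏_m Γ(1+mα)² · det[V(mα,j)]², and since V(·,j) is monic of degree j-1,
   det[V(mα,j)] is the Vandermonde determinant ∏_{i<j}(j-i)α = ∏_j α^{j-1}(j-1)!. *)
From Stdlib Require Import Reals Lra ZArith ClassicalEpsilon.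
From mathcomp Require Import all_boot all_order all_algebra all_fingroup.

Local Open Scope R_scope.

Lemma INR_succ_gt0 n : 0 < INR n.+1.
Proof. exact: lt_0_INR (Nat.lt_0_succ n). Qed.

Lemma rising_prodS x n : rising_prod x n.+1 = rising_prod x n * (x + INR n.+1).
Proof. by []. Qed.

Lemma rising_prod_gt0 x n : 0 < x -> 0 < rising_prod x n.
Proof.
move=> x_gt0; elim: n => [|n IHn] //; rewrite rising_prodS.
by apply: Rmult_lt_0_compat => //; have := INR_succ_gt0 n; lra.
Qed.

Lemma rising_prod_shift x n : x * rising_prod (x + 1) n = rising_prod x n.+1.
Proof.
elim: n => [|n IHn]; first by rewrite /=; ring.
by rewrite rising_prodS [rising_prod x n.+2]rising_prodS -IHn !S_INR; ring.
Qed.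

Lemma Un_cv_succE (u : nat -> R) l : Un_cv (fun n => u n.+1) l <-> Un_cv u l.
Proof.
have shift1 n : u (n + 1)%coq_nat = u n.+1 by rewrite Nat.add_1_r.
split=> [cv_u | /(CV_shift' _ 1) cv_u].
- by apply: (CV_shift _ 1); apply: Un_cv_ext cv_u => n; rewrite shift1.
- by apply: Un_cv_ext cv_u => n; rewrite shift1.
Qed.

Lemma exp_scale_le t e : 0 <= t <= 1 -> exp (t * e) <= 1 + t * (exp e - 1).
Proof.
(* The tangent line of exp at t e, evaluated at e and at 0, weighted by t and 1 - t. *)
move=> t01.
have Ee : exp e = exp (t * e) * exp ((1 - t) * e) by rewrite -exp_plus; f_equal; ring.
have E1 : 1 = exp (t * e) * exp (- (t * e)) by rewrite -exp_plus -exp_0; f_equal; ring.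
have ge1 := exp_ineq1_le ((1 - t) * e); have ge2 := exp_ineq1_le (- (t * e)).
have pos := exp_pos (t * e); set E := exp (t * e) in Ee E1 pos *.
have le1 : E * (1 + (1 - t) * e) <= exp e by rewrite Ee; apply: Rmult_le_compat_l; lra.
have le2 : E * (1 + - (t * e)) <= 1 by rewrite [X in _ <= X]E1; apply: Rmult_le_compat_l; lra.
nra.
Qed.

Lemma Rpower_succ_ge N x : 1 <= N -> 0 <= x ->
  (x + N + 1) * Rpower N x <= (N + 1) * Rpower (N + 1) x.
Proof.
move=> N_ge1 x_ge0; rewrite /Rpower.
set d := ln (N + 1) - ln N.
have -> : x * ln (N + 1) = x * ln N + x * d by rewrite /d; ring.
rewrite exp_plus.
have expNd : exp (- d) = N / (N + 1).
  rewrite /d Ropp_minus_distr exp_plus exp_Ropp !exp_ln; lra.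
have d_ge : 1 <= d * (N + 1).
  have le := exp_ineq1_le (- d); rewrite expNd in le.
  have : (N + 1) * (1 + - d) <= (N + 1) * (N / (N + 1)) by apply: Rmult_le_compat_l; lra.
  have -> : (N + 1) * (N / (N + 1)) = N by field; lra.
  lra.
have le := exp_ineq1_le (x * d); have pos := exp_pos (x * ln N).
have : x + N + 1 <= (N + 1) * exp (x * d) by nra.
nra.
Qed.

Lemma Rpower_succ_le N x : 1 <= N -> 0 <= x <= 1 ->
  (N + 1) * Rpower (N + 2) x <= (x + N + 1) * Rpower (N + 1) x.
Proof.
move=> N_ge1 x01; rewrite /Rpower.
set e := ln (N + 2) - ln (N + 1).
have -> : x * ln (N + 2) = x * ln (N + 1) + x * e by rewrite /e; ring.
rewrite exp_plus.
have expe : exp e = (N + 2) / (N + 1).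
  rewrite /e /Rminus exp_plus exp_Ropp !exp_ln; lra.
have le := exp_scale_le x e x01; rewrite expe in le.
have pos := exp_pos (x * ln (N + 1)).
have : (N + 1) * exp (x * e) <= x + N + 1.
  have -> : x + N + 1 = (N + 1) * (1 + x * ((N + 2) / (N + 1) - 1)) by field; lra.
  by apply: Rmult_le_compat_l; lra.
nra.
Qed.

Lemma gauss_seq_shift x n : 0 < x ->
  gauss_seq (x + 1) n.+1 = gauss_seq x n.+1 * (x * INR n.+1 / (x + INR n.+1 + 1)).
Proof.
move=> x_gt0; rewrite /gauss_seq Rpower_plus Rpower_1; last exact: INR_succ_gt0.
have P_gt0 := rising_prod_gt0 x n.+1 x_gt0; have n_ge0 := pos_INR n.
have -> : rising_prod (x + 1) n.+1 = rising_prod x n.+1 * (x + INR n.+2) / x.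
  by rewrite -rising_prodS -(rising_prod_shift x n.+1); field; lra.
by rewrite !S_INR; field; repeat split; lra.
Qed.

Lemma Un_cv_shift_ratio x : 0 < x -> Un_cv (fun n => x * INR n / (x + INR n + 1)) x.
Proof.
move=> x_gt0 eps eps_gt0.
have c_gt0 : 0 < x * (x + 1) by nra.
have [N [N_gt0 N_big]] := archimed_cor1 (eps / (x * (x + 1))) (Rdiv_lt_0_compat _ _ eps_gt0 c_gt0).
exists N => n le_Nn; rewrite /Rdist.
have N_le_n : INR N <= INR n by apply: le_INR.
have N_pos : 0 < INR N by apply: lt_0_INR.
have -> : x * INR n / (x + INR n + 1) - x = - (x * (x + 1) / (x + INR n + 1)) by field; lra.
rewrite Rabs_Ropp Rabs_right; last by apply/Rle_ge/Rlt_le/Rdiv_lt_0_compat; lra.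
have le1 : x * (x + 1) / (x + INR n + 1) <= x * (x + 1) / INR N.
  by apply: Rmult_le_compat_l; [lra | apply: Rinv_le_contravar; lra].
have lt2 : x * (x + 1) / INR N < eps.
  have : / INR N * (x * (x + 1)) < eps / (x * (x + 1)) * (x * (x + 1)).
    exact: Rmult_lt_compat_r.
  have -> : eps / (x * (x + 1)) * (x * (x + 1)) = eps by field; lra.
  by rewrite /Rdiv Rmult_comm.
lra.
Qed.

Lemma gauss_seq_cv_succ x l : 0 < x ->
  Un_cv (gauss_seq x) l -> Un_cv (gauss_seq (x + 1)) (l * x).
Proof.
move=> x_gt0 cv_l; apply/Un_cv_succE.
have cv_prod :=
  proj2 (Un_cv_succE _ _) (CV_mult _ _ _ _ cv_l (Un_cv_shift_ratio x x_gt0)).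
by apply: Un_cv_ext cv_prod => n; rewrite gauss_seq_shift.
Qed.

(* A decreasing majorant of gauss_seq x when 0 < x <= 1. *)
Definition gauss_upper x n :=
  INR (Factorial.fact n) * Rpower (INR n + 1) x / rising_prod x n.

Lemma gauss_seq_le_succ x n : 0 < x -> gauss_seq x n.+1 <= gauss_seq x n.+2.
Proof.
move=> x_gt0; rewrite /gauss_seq (fact_simpl n.+1) mult_INR (rising_prodS x n.+1) (S_INR n.+1).
set N := INR n.+1; set F := INR (Factorial.fact n.+1); set P := rising_prod x n.+1.
have N_ge1 : 1 <= N by rewrite /N S_INR; have := pos_INR n; lra.
have F_gt0 : 0 < F by apply: INR_fact_lt_0.
have P_gt0 : 0 < P by apply: rising_prod_gt0.
have -> : F * Rpower N x / P = F / (P * (x + (N + 1))) * ((x + N + 1) * Rpower N x).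
  by field; lra.
have -> : (N + 1) * F * Rpower (N + 1) x / (P * (x + (N + 1)))
    = F / (P * (x + (N + 1))) * ((N + 1) * Rpower (N + 1) x) by field; lra.
apply: Rmult_le_compat_l; last by apply: Rpower_succ_ge; lra.
by apply/Rlt_le/Rdiv_lt_0_compat => //; apply: Rmult_lt_0_compat; lra.
Qed.

Lemma gauss_upper_succ_le x n : 0 < x <= 1 -> gauss_upper x n.+2 <= gauss_upper x n.+1.
Proof.
move=> x01; rewrite /gauss_upper (fact_simpl n.+1) mult_INR (rising_prodS x n.+1) (S_INR n.+1).
set N := INR n.+1; set F := INR (Factorial.fact n.+1); set P := rising_prod x n.+1.
have N_ge1 : 1 <= N by rewrite /N S_INR; have := pos_INR n; lra.
have F_gt0 : 0 < F by apply: INR_fact_lt_0.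
have P_gt0 : 0 < P by apply: rising_prod_gt0; lra.
have -> : F * Rpower (N + 1) x / P = F / (P * (x + (N + 1))) * ((x + N + 1) * Rpower (N + 1) x).
  by field; lra.
have -> : (N + 1) * F * Rpower (N + 1 + 1) x / (P * (x + (N + 1)))
    = F / (P * (x + (N + 1))) * ((N + 1) * Rpower (N + 2) x).
  by rewrite (_ : N + 1 + 1 = N + 2); [field; lra | ring].
apply: Rmult_le_compat_l; last by apply: Rpower_succ_le; lra.
by apply/Rlt_le/Rdiv_lt_0_compat => //; apply: Rmult_lt_0_compat; lra.
Qed.

Lemma gauss_seq_le_upper x n : 0 < x -> gauss_seq x n.+1 <= gauss_upper x n.+1.
Proof.
move=> x_gt0; rewrite /gauss_seq /gauss_upper /Rdiv.
have n_gt0 := INR_succ_gt0 n.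
apply/Rmult_le_compat_r/Rmult_le_compat_l.
- exact/Rlt_le/Rinv_0_lt_compat/rising_prod_gt0.
- exact/Rlt_le/INR_fact_lt_0.
apply/Rlt_le/exp_increasing/Rmult_lt_compat_l => //.
by apply: ln_increasing; lra.
Qed.

Lemma gauss_seq_cv_le1 x : 0 < x <= 1 -> exists l, Un_cv (gauss_seq x) l.
Proof.
move=> x01; have x_gt0 : 0 < x by lra.
have upper_le n : gauss_upper x n.+1 <= gauss_upper x 1.
  elim: n => [|n IHn]; first lra.
  by have := gauss_upper_succ_le x n x01; lra.
have [l cv_l] : {l | Un_cv (fun n => gauss_seq x n.+1) l}.
  apply: growing_cv => [n | ]; first exact: gauss_seq_le_succ.
  exists (gauss_upper x 1) => _ [n ->].
  by have := gauss_seq_le_upper x n x_gt0; have := upper_le n; lra.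
by exists l; apply/Un_cv_succE.
Qed.

Lemma gauss_seq_cv x : 0 < x -> exists l, Un_cv (gauss_seq x) l.
Proof.
move=> x_gt0.
have [m x_le] : exists m : nat, x <= INR m + 1.
  have [up_gt up_le] := archimed x.
  have up_ge0 : Z.le 0 (up x) by apply: le_IZR; rewrite /=; lra.
  by exists (Z.to_nat (up x)); rewrite INR_IZR_INZ Z2Nat.id //; lra.
elim: m x x_gt0 x_le => [|m IHm] x x_gt0 x_le.
  by apply: gauss_seq_cv_le1; rewrite /= in x_le; lra.
have [x_le1 | x_gt1] := Rle_or_lt x 1; first by apply: gauss_seq_cv_le1; lra.
have [l cv_l] : exists l, Un_cv (gauss_seq (x - 1)) l.
  by apply: IHm; rewrite S_INR in x_le; lra.
exists (l * (x - 1)).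
have -> : gauss_seq x = gauss_seq (x - 1 + 1) by congr gauss_seq; ring.
by apply: gauss_seq_cv_succ => //; lra.
Qed.

Lemma Gamma_cv x : 0 < x -> Un_cv (gauss_seq x) (Gamma x).
Proof.
move=> x_gt0; rewrite /Gamma.
exact: epsilon_spec (inhabits 0) _ (gauss_seq_cv x x_gt0).
Qed.

Lemma GammaS x : 0 < x -> Gamma (x + 1) = x * Gamma x.
Proof.
move=> x_gt0; rewrite Rmult_comm.
apply: UL_sequence (Gamma_cv (x + 1) ltac:(lra)) _.
exact: gauss_seq_cv_succ x_gt0 (Gamma_cv x x_gt0).
Qed.

Local Close Scope R_scope.
(* Imported only here: MathComp's ring tactic shadows the Stdlib one used above. *)
From mathcomp Require Import ring zify.
Import GRing.Theory.
Local Open Scope ring_scope.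

Definition poch {R : nzRingType} (z : R) (j : nat) : R := \prod_(r < j) (r.+1%:R + z).

Definition poch_poly {R : nzRingType} (j : nat) : {poly R} :=
  \prod_(r < j) ('X - (- r.+1%:R)%:P).

Lemma size_poch_poly {R : nzRingType} j : size (poch_poly j : {poly R}) = j.+1.
Proof. by rewrite size_prod_XsubC -[index_enum _]enumT -cardE card_ord. Qed.

Lemma monic_poch_poly {R : nzRingType} j : (poch_poly j : {poly R}) \is monic.
Proof. exact: monic_prod_XsubC. Qed.

Lemma horner_poch_poly {R : comNzRingType} (z : R) j : (poch_poly j).[z] = poch z j.
Proof.
rewrite horner_prod; apply: eq_bigr => r _.
by rewrite hornerXsubC opprK addrC.
Qed.

Lemma det_monic_Vandermonde {R : comNzRingType} {k} (p : nat -> {poly R}) (a : 'rV[R]_k) :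
    (forall j, p j \is monic) -> (forall j, size (p j) = j.+1) ->
  \det (\matrix_(m < k, j < k) (p j).[a 0 m]) = \det (Vandermonde k a).
Proof.
move=> p_monic size_p.
pose U : 'M[R]_k := \matrix_(i, j) (p j)`_i.
have -> : \matrix_(m < k, j < k) (p j).[a 0 m] = (Vandermonde k a)^T *m U.
  apply/matrixP => m j; rewrite !mxE (@horner_coef_wide _ k); last by rewrite size_p.
  by apply: eq_bigr => i _; rewrite !mxE mulrC.
have detU : \det U = 1.
  rewrite -det_tr det_trig; last first.
    by apply/is_trig_mxP => i j lt_ij; rewrite !mxE nth_default // size_p.
  apply: big1 => i _; rewrite !mxE.
  by have /monicP := p_monic i; rewrite lead_coefE size_p.
by rewrite det_mulmx det_tr detU mulr1.
Qed.

Lemma prod_ord_rev_fact j : \prod_(i < j) (j - i)%N = j`!.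
Proof.
rewrite fact_prod big_add1 /= big_mkord (reindex_inj rev_ord_inj) /=.
by apply: eq_bigr => i _; rewrite subKn.
Qed.

Lemma prod_diff_arith {R : comNzRingType} (c : R) k :
  \prod_(i < k) \prod_(j < k | (i < j)%N) (j.+1%:R * c - i.+1%:R * c) =
  \prod_(j < k) (c ^+ j * j`!%:R).
Proof.
rewrite (eq_bigr _ (fun i _ => big_mkcond _ _)) exchange_big /=.
apply: eq_bigr => j _; rewrite -big_mkcond /=.
rewrite -(big_ord_widen _ (fun i => j.+1%:R * c - i.+1%:R * c)); last exact: ltnW.
under eq_bigr => i _ do rewrite -mulrBl -natrB ?ltnS 1?ltnW // subSS.
by rewrite big_split /= prodr_const card_ord mulrC -natr_prod prod_ord_rev_fact.
Qed.

Lemma sqr_prod_expr_ord {R : comNzRingType} (c : R) k :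
  (\prod_(j < k) c ^+ j) ^+ 2 = c ^+ (k * (k - 1)).
Proof.
elim: k => [|k IHk]; first by rewrite big_ord0 expr1n.
rewrite big_ord_recr /= exprMn IHk -exprM -exprD; congr (_ ^+ _).
by case: k {IHk} => [|k] //=; rewrite !subn1 /=; nia.
Qed.

Lemma sum_det_perm_rows_weighted {R : comNzRingType} {k} (g : 'I_k -> R) (V : 'M[R]_k) :
  \sum_(s : 'S_k) \det (\matrix_(i, j) (g (s i) * V (s i) i * V (s i) j))
  = \prod_i g i * \det V ^+ 2.
Proof.
have det_s (s : 'S_k) : \det (\matrix_(i, j) (g (s i) * V (s i) i * V (s i) j))
    = \prod_i g i * \det V * ((-1) ^+ s * \prod_i V^T i (s i)).
  have -> : \matrix_(i, j) (g (s i) * V (s i) i * V (s i) j)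
      = diag_mx (\row_i (g (s i) * V (s i) i)) *m row_perm s V.
    by apply/matrixP => i j; rewrite mul_diag_mx !mxE.
  rewrite det_mulmx det_diag row_permE det_mulmx det_perm.
  under eq_bigr do rewrite mxE.
  under [\prod_i V^T i (s i)]eq_bigr do rewrite mxE.
  rewrite big_split /= [\prod_i g i](reindex_inj (@perm_inj _ s)) /=.
  by rewrite mulrACA [RHS]mulrACA [\det V * _]mulrC.
rewrite (eq_bigr _ (fun s _ => det_s s)) -mulr_sumr.
by rewrite -[\sum_s _]/(\det V^T) det_tr -mulrA -expr2.
Qed.

Lemma natr_INR n : (n%:R : R) = INR n.
Proof. by elim: n => [|n IHn] //; rewrite mulrS IHn S_INR addrC. Qed.

Lemma Gamma_natD (y : R) j : Rlt R0 y -> Gamma (j.+1%:R + y) = Gamma (1 + y) * poch y j.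
Proof.
move=> y_gt0; elim: j => [|j IHj]; first by rewrite /poch big_ord0 mulr1.
rewrite /poch big_ord_recr /= mulrA -IHj.
have -> : j.+2%:R + y = (j.+1%:R + y) + 1 by rewrite mulrS; ring.
rewrite GammaS; first exact: mulrC.
rewrite -[_ + y]/(Rplus _ y) natr_INR.
by have := pos_INR j.+1; lra.
Qed.

Theorem mainTheorem6 (alpha : R) (k : nat) (halpha : Rlt R0 alpha) (hk : (2 <= k)%N) :
  \sum_(s : 'S_k)
     \det (\matrix_(i < k, j < k)
             (Gamma (1 + (s i).+1%:R * alpha)
              * Gamma (j.+1%:R + (s i).+1%:R * alpha)
              * \prod_(r < i) (r.+1%:R + (s i).+1%:R * alpha)))
  = alpha ^+ (k * (k - 1))
    * (\prod_(j < k) ((j`!)%:R * Gamma (1 + alpha * j.+1%:R))) ^+ 2.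
Proof.
(* The identity holds for every k. *)
pose y (m : 'I_k) : R := m.+1%:R * alpha.
have y_gt0 m : Rlt R0 (y m).
  by rewrite /y natr_INR; apply: Rmult_lt_0_compat => //; apply: INR_succ_gt0.
pose g (m : 'I_k) := Gamma (1 + y m) ^+ 2.
pose V : 'M[R]_k := \matrix_(m, j) poch (y m) j.
under eq_bigr => s _.
  have -> : \matrix_(i < k, j < k) (Gamma (1 + (s i).+1%:R * alpha)
              * Gamma (j.+1%:R + (s i).+1%:R * alpha)
              * \prod_(r < i) (r.+1%:R + (s i).+1%:R * alpha))
      = \matrix_(i, j) (g (s i) * V (s i) i * V (s i) j).
    apply/matrixP => i j; rewrite /g /V !mxE (Gamma_natD _ _ (y_gt0 (s i))).
    by rewrite /poch expr2; ring.
  over.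
have detV : \det V = \prod_(j < k) (alpha ^+ j * j`!%:R).
  have -> : V = \matrix_(m, j) (poch_poly j).[(\row_m y m) 0 m].
    by apply/matrixP => m j; rewrite !mxE horner_poch_poly.
  rewrite (det_monic_Vandermonde _ _ monic_poch_poly size_poch_poly).
  rewrite det_Vandermonde -prod_diff_arith.
  by apply: eq_bigr => i _; apply: eq_bigr => j _; rewrite !mxE.
rewrite (sum_det_perm_rows_weighted g V) detV [\prod_(j < k) (alpha ^+ j * _)]big_split /=.
rewrite exprMn sqr_prod_expr_ord [\prod_(j < k) (_%:R * _)]big_split /= exprMn prodrXl.
have -> : \prod_(j < k) Gamma (1 + alpha * j.+1%:R) = \prod_j Gamma (1 + y j).
  by apply: eq_bigr => j _; rewrite /y mulrC.
by rewrite mulrCA; congr (_ * _); rewrite mulrC.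
Qed.
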